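(* Let $V$ be a finite dimensional real vector space and $f_1, f_2 \in C^2(V)$ be functions such that $d^2 f_1(x)$ and $d^2 f_2(x)$ are positive definite for all $x \in V$. Then $d(f_1 + f_2)(V) = df_1(V) + df_2(V)$ (Minkowski sum). *)

(* V = 'rV[R]_n, R : realType (a finite-dimensional
   real vector space, up to linear isomorphism). *)
From HB Require Import structures.
From mathcomp Require Import all_boot all_order all_algebra.
From mathcomp Require Import all_classical all_reals all_analysis.
Set Implicit Arguments. Unset Strict Implicit. Unset Printing Implicit Defensive.
Import Order.TTheory GRing.Theory Num.Theory.
Import numFieldNormedType.Exports.
Local Open Scope classical_set_scope.
Local Open Scope ring_scope.

Definition d2 (R : realType) (n : nat) (f : 'rV[R]_n -> R) (x u v : 'rV[R]_n) : R :=
  'D_u (fun y => 'd f y v) x.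

Definition C2 (R : realType) (n : nat) (f : 'rV[R]_n -> R) : Prop :=
  (forall x, differentiable f x) /\
  (forall v x, differentiable (fun y => 'd f y v) x) /\
  (forall u v, continuous (fun x => d2 f x u v)).

Definition hess_posdef (R : realType) (n : nat) (f : 'rV[R]_n -> R) (x : 'rV[R]_n) : Prop :=
  forall v : 'rV[R]_n, v != 0 -> 0 < d2 f x v v.

Definition diff_image (R : realType) (n : nat) (f : 'rV[R]_n -> R) : set ('rV[R]_n -> R) :=
  [set (fun v => 'd f x v) | x in [set: 'rV[R]_n]].

Definition minkowski_sum (R : realType) (n : nat) (A B : set ('rV[R]_n -> R)) :
  set ('rV[R]_n -> R) := [set a \+ b | a in A & b in B].

From HB Require Import structures.
From mathcomp Require Import all_boot all_order all_algebra.
From mathcomp Require Import all_classical all_reals all_analysis.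
From mathcomp Require Import ring lra.
Set Implicit Arguments. Unset Strict Implicit. Unset Printing Implicit Defensive.
Import Order.TTheory GRing.Theory Num.Theory.
Import numFieldNormedType.Exports.
Local Open Scope classical_set_scope.
Local Open Scope ring_scope.

(* Given a and b, consider G = f1 + f2 - df1(a) - df2(b).  By the mean value
   theorem, positive definiteness makes t |-> df(x + t v) v strictly increasing,
   so the Bregman remainder f(a + u) - f(a) - df(a) u is nonnegative, positive
   for u <> 0, and superlinear along rays.  By compactness of the unit sphere the
   remainder of f1 at a grows at least like d (|u| - 1) with d > 0, hence G is
   coercive and attains a minimum at some m, where its differential vanishes:
   df1(m) + df2(m) = df1(a) + df2(b). *)

Section LineRestriction.
Variables (R : realType) (n : nat).
Notation V := 'rV[R]_n.

Lemma is_derive_along_line (F : V -> R) (x v : V) (t : R) :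
  differentiable F (x + t *: v) ->
  is_derive t 1 (fun s => F (x + s *: v)) ('d F (x + t *: v) v).
Proof.
move=> dF.
have quotientE : (fun h : R => h^-1 *: (((fun s => F (x + s *: v)) \o shift t) (h *: 1)
                                      - F (x + t *: v)))
  = (fun h : R => h^-1 *: ((F \o shift (x + t *: v)) (h *: v) - F (x + t *: v))).
  apply/funext => h /=; congr (_ *: (F _ - _)).
  by rewrite -[h%:A]/(h * 1) mulr1 scalerDl addrCA.
split; first by rewrite /derivable quotientE; exact: diff_derivable.
by rewrite -deriveE // /derive quotientE.
Qed.

Lemma MVT_along_line (F : V -> R) (x v : V) (t s : R) :
  (forall y, differentiable F y) -> t < s ->
  exists2 c, t < c < s &
    F (x + s *: v) - F (x + t *: v) = 'd F (x + c *: v) v * (s - t).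
Proof.
move=> dF ts.
have F'_line c := is_derive_along_line (dF (x + c *: v)).
have [|c cts ->] := MVT ts (fun c _ => F'_line c).
  by apply: derivable_within_continuous => c _; have [] := F'_line c.
by exists c; rewrite in_itv in cts.
Qed.

Lemma diff_eq_at_min_tilt (F : V -> R) (L : {linear V -> R}) (m : V) :
  (forall y, differentiable F y) -> (forall x, F m - L m <= F x - L x) ->
  forall v, 'd F m v = L v.
Proof.
move=> dF Fmin v.
pose phi := (fun s => F (m + s *: v)) - L v \*: id.
have phi' (t : R) : is_derive t 1 phi ('d F (m + t *: v) v - (L v)%:A).
  exact: is_deriveB (is_derive_along_line (dF (m + t *: v)))
                    (is_deriveZ _ (is_derive_id t 1)).
have phi_min : is_derive (0 : R) 1 phi 0.
  apply: (@derive1_at_min _ phi (-1) 1); first by rewrite ge0_cp.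
  - by move=> t _; have [] := phi' t.
  - by rewrite in_itv /= ltrN10 ltr01.
  move=> t _; have := Fmin (m + t *: v).
  rewrite /phi !fctE /= scale0r addr0 scaler0 subr0 linearD linearZ /= opprD addrA.
  by rewrite -[t *: L v]/(t * L v) -[L v *: t]/(L v * t); lra.
have [_ phi'0] := phi' 0; have [_ phi'0_eq0] := phi_min.
rewrite scale0r addr0 phi'0_eq0 in phi'0.
by apply/eqP; rewrite -subr_eq0 -[L v]mulr1 -phi'0.
Qed.

End LineRestriction.

Section Coercivity.
Variables (R : realType) (n : nat).
Notation V := 'rV[R]_n.

Lemma closed_norm_bounded_compact (A : set V) (r : R) :
  closed A -> (forall x, A x -> `|x| <= r) -> compact A.
Proof.
move=> Acl Ar; apply: bounded_closed_compact => //.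
exists r; split; first exact: num_real.
by move=> M rM x /Ar xr; apply: le_trans xr (ltW rM).
Qed.

Lemma compact_norm_le (r : R) : compact [set x : V | `|x| <= r].
Proof.
apply: (@closed_norm_bounded_compact _ r) => //.
exact: (proj1 (continuous_closedP _) norm_continuous _ (@closed_le _ r)).
Qed.

Lemma compact_unit_sphere : compact [set x : V | `|x| = 1].
Proof.
apply: (@closed_norm_bounded_compact _ 1) => [|x ->//].
exact: (proj1 (continuous_closedP _) norm_continuous _ (@closed_eq _ 1)).
Qed.

Lemma continuous_coercive_has_min (G : V -> R) (a : V) (C d : R) :
  continuous G -> 0 < d -> (forall x, C + d * `|x - a| <= G x) ->
  exists m, forall x, G m <= G x.
Proof.
move=> Gc d0 G_ge.
pose r := `|a| + `|G a - C| / d.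
have a_in : `|a| <= r by rewrite lerDl divr_ge0 // ltW.
have [m _ m_min] := EVT_min_rV (ex_intro _ a a_in) (@compact_norm_le r)
                                (continuous_subspaceT Gc).
exists m => x; have [xr|rx] := leP `|x| r; first exact/m_min/mem_set.
have far : `|G a - C| < d * (`|x| - `|a|) by rewrite -ltr_pdivrMl // mulrC ltrBrDl.
have := ler_wpM2l (ltW d0) (ler_normD (x - a) a); rewrite subrK.
have := m_min a (mem_set a_in); have := G_ge x; have := ler_norm (G a - C); lra.
Qed.

Lemma unit_sphere_pos_lower_bound (k : V -> R) :
  continuous k -> (forall u, `|u| = 1 -> 0 < k u) ->
  exists2 d, 0 < d & forall u, `|u| = 1 -> d <= k u.
Proof.
move=> kc k_gt0.
have [[u0 u01]|empty] := pselect ([set u : V | `|u| = 1] !=set0); last first.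
  by exists 1 => // u u1; exfalso; apply: empty; exists u.
have [c c1 c_min] := EVT_min_rV (ex_intro _ u0 u01) compact_unit_sphere
                                (continuous_subspaceT kc).
by exists (k c) => [|u u1]; [apply/k_gt0/set_mem | apply/c_min/mem_set].
Qed.

End Coercivity.

Definition bregman (R : realType) (n : nat) (f : 'rV[R]_n -> R) (a u : 'rV[R]_n) : R :=
  f (a + u) - f a - 'd f a u.

Lemma bregman_subE (R : realType) (n : nat) (f : 'rV[R]_n -> R) (a x : 'rV[R]_n) :
  bregman f a (x - a) = f x - 'd f a x - (f a - 'd f a a).
Proof. by rewrite /bregman addrCA subrr addr0 linearB /=; lra. Qed.

Section StrictlyConvex.
Variables (R : realType) (n : nat) (f : 'rV[R]_n -> R).
Hypotheses (f_C2 : C2 f) (f_posdef : forall x, hess_posdef f x).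
Notation V := 'rV[R]_n.

Lemma diff_along_line_lt (x v : V) (t s : R) : v != 0 -> t < s ->
  'd f (x + t *: v) v < 'd f (x + s *: v) v.
Proof.
move=> v0 ts; have [_ [d2f _]] := f_C2.
have [c _ eq_incr] := MVT_along_line x v (d2f v) ts.
rewrite -subr_gt0 eq_incr mulr_gt0 ?subr_gt0 // -deriveE //; exact: f_posdef.
Qed.

Lemma bregman_gt0 (a u : V) : u != 0 -> 0 < bregman f a u.
Proof.
move=> u0; have [c /andP[c0 _]] := MVT_along_line a u f_C2.1 ltr01.
rewrite scale1r scale0r addr0 subr0 mulr1 /bregman => ->.
by rewrite subr_gt0 -[a in 'd f a]addr0 -(scale0r u) diff_along_line_lt.
Qed.

Lemma bregman_ge0 (a u : V) : 0 <= bregman f a u.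
Proof.
have [->|u0] := eqVneq u 0; last exact/ltW/bregman_gt0.
by rewrite /bregman addr0 linear0; lra.
Qed.

Lemma bregman_superlinear (a u : V) (r : R) : 1 <= r ->
  r * bregman f a u <= bregman f a (r *: u).
Proof.
rewrite le_eqVlt => /predU1P[<-|r1]; first by rewrite scale1r mul1r.
have [->|u0] := eqVneq u 0; first by rewrite scaler0 /bregman addr0 linear0; lra.
have [c1 /andP[_ c1_lt1] incr1] := MVT_along_line a u f_C2.1 ltr01.
have [c2 /andP[c2_gt1 _] incr2] := MVT_along_line a u f_C2.1 r1.
rewrite scale1r scale0r addr0 subr0 mulr1 in incr1; rewrite scale1r in incr2.
rewrite /bregman linearZ /= -subr_ge0.
(* the two sides differ by (r - 1) (f'(c2) - f'(c1)) along the ray, with c1 < 1 < c2 *)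
have -> : f (a + r *: u) - f a - r * 'd f a u - r * (f (a + u) - f a - 'd f a u)
        = (f (a + r *: u) - f (a + u)) - (r - 1) * (f (a + u) - f a) by ring.
rewrite incr1 incr2 [_ * (r - 1)]mulrC -mulrBr.
apply: mulr_ge0; rewrite subr_ge0; first exact: ltW.
exact/ltW/(diff_along_line_lt a u0 (lt_trans c1_lt1 c2_gt1)).
Qed.

Lemma continuous_bregman (a : V) : continuous (bregman f a).
Proof.
have [f_diff _] := f_C2.
have -> : bregman f a = (f \o (cst a + id)) - cst (f a) - ('d f a : V -> R) by [].
move=> u; apply: continuousB; last exact: diff_continuous.
apply: continuousB; last exact: cst_continuous.
apply: continuous_comp; last exact: differentiable_continuous.
apply: continuousD; [exact: cst_continuous | exact: cvg_id].
Qed.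

Lemma bregman_linear_growth (a : V) :
  exists2 d, 0 < d & forall w, d * (`|w| - 1) <= bregman f a w.
Proof.
have sphere_gt0 (u : V) : `|u| = 1 -> 0 < bregman f a u.
  by move=> u1; apply: bregman_gt0; rewrite -normr_eq0 u1 oner_neq0.
have [d d0 d_le] := unit_sphere_pos_lower_bound (@continuous_bregman a) sphere_gt0.
exists d => // w; have [w_le1|w_gt1] := leP `|w| 1.
  by apply: le_trans (bregman_ge0 a w); rewrite pmulr_rle0 // subr_le0.
have w_gt0 : 0 < `|w| by apply: lt_trans w_gt1.
have w_scale : w = `|w| *: (`|w|^-1 *: w) by rewrite scalerA divff ?scale1r ?gt_eqF.
have unit_w : `|(`|w|^-1 *: w)| = 1.
  by rewrite normrZ normrV ?unitfE ?gt_eqF // normr_id mulVf ?gt_eqF.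
rewrite [in leRHS]w_scale; apply: le_trans (bregman_superlinear _ _ (ltW w_gt1)).
apply: le_trans (_ : `|w| * d <= _).
  by rewrite [_ * d]mulrC; apply: ler_wpM2l; [exact: ltW | lra].
by apply: ler_wpM2l; [exact: ltW | exact: d_le].
Qed.

End StrictlyConvex.

Lemma tilted_sum_has_min (R : realType) (n : nat) (f1 f2 : 'rV[R]_n -> R)
    (a b : 'rV[R]_n) :
  C2 f1 -> C2 f2 -> (forall x, hess_posdef f1 x) -> (forall x, hess_posdef f2 x) ->
  exists m, forall x, f1 m + f2 m - ('d f1 a m + 'd f2 b m)
                      <= f1 x + f2 x - ('d f1 a x + 'd f2 b x).
Proof.
move=> C2f1 C2f2 f1_pd f2_pd.
pose G := (bregman f1 a \o (id - cst a)) + (bregman f2 b \o (id - cst b)).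
have GE x : G x = bregman f1 a (x - a) + bregman f2 b (x - b) by [].
have G_cont : continuous G.
  move=> x; apply: continuousD; apply: continuous_comp;
    do ?[exact: continuous_bregman
        | apply: continuousB; [exact: cvg_id | exact: cst_continuous]].
have [d d0 growth1] := bregman_linear_growth C2f1 f1_pd a.
have [|m m_min] := @continuous_coercive_has_min _ _ G a (- d) d G_cont d0.
  move=> x; rewrite GE; have := growth1 (x - a).
  by have := bregman_ge0 C2f2 f2_pd b (x - b); lra.
have GP y : G y = f1 y + f2 y - ('d f1 a y + 'd f2 b y)
                  - (f1 a - 'd f1 a a + (f2 b - 'd f2 b b)).
  by rewrite GE !bregman_subE addrACA -opprD addrACA -opprD.
by exists m => x; have := m_min x; rewrite !GP lerD2r.
Qed.

Theorem lemma1p19 (R : realType) (n : nat) (f1 f2 : 'rV[R]_n -> R) :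
  C2 f1 -> C2 f2 ->
  (forall x, hess_posdef f1 x) -> (forall x, hess_posdef f2 x) ->
  diff_image (f1 \+ f2) = minkowski_sum (diff_image f1) (diff_image f2).
Proof.
move=> C2f1 C2f2 f1_pd f2_pd.
have diff_sum x : 'd (f1 \+ f2) x = 'd f1 x \+ 'd f2 x :> (_ -> R).
  exact: diffD (C2f1.1 x) (C2f2.1 x).
apply/seteqP; split=> [_ [x _ <-]|_ [_ [a _ <-] [_ [b _ <-] <-]]].
  exists (fun v => 'd f1 x v); first by exists x.
  exists (fun v => 'd f2 x v); first by exists x.
  by apply/funext => v; rewrite /= diff_sum.
have [m m_min] := tilted_sum_has_min a b C2f1 C2f2 f1_pd f2_pd.
have dF x : differentiable (f1 \+ f2) x.
  exact: differentiableD (C2f1.1 x) (C2f2.1 x).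
exists m => //; apply/funext => v.
exact: (diff_eq_at_min_tilt (L := 'd f1 a \+ 'd f2 b) dF m_min).
Qed.
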